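(* Let $M$ and $M'$ be end-decisive MM-QFAs that accept $L$ and $L'$ respectively with bounded positive one-sided error. Then there exists an end-decisive MM-QFA that accepts $L\cap L'$ with bounded positive one-sided error.
   Context: A measure-many quantum finite automaton (MM-QFA) over $\Sigma$ is a tuple $(Q,\Sigma,\{U_\sigma\}_{\sigma\in\Sigma\cup\{\$\}},q_0,Q_{acc},Q_{rej})$ with $Q$ finite indexing an orthonormal basis of $\mathbb{C}^Q$, end-marker $\$\notin\Sigma$, unitary $U_\sigma$, initial state $q_0$, and $Q$ partitioned into $Q_{acc},Q_{rej},Q_{non}$ with orthogonal projections $P_{acc},P_{rej},P_{non}$. On input $x$ it processes $x\$$ maintaining $(\psi,p_{acc},p_{rej})$, initially $(|q_0\rangle,0,0)$; on reading $\sigma$: $\psi'=U_\sigma\psi$, $p_{acc}\mathrel{+}=\|P_{acc}\psi'\|^2$, $p_{rej}\mathrel{+}=\|P_{rej}\psi'\|^2$, $\psi\leftarrow P_{non}\psi'$; the acceptance probability $p(x)$ is the final $p_{acc}$. It is end-decisive if $P_{acc}\psi'=0$ after reading every non-end-marker symbol, on every input. It accepts $L$ with bounded positive one-sided error if there is $c>0$ with $p(x)>c$ for all $x\in L$ and $p(x)=0$ for all $x\notin L$. *)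

From mathcomp Require Import all_boot all_algebra.
From mathcomp Require Import complex.
From mathcomp Require Import Rstruct.
Set Implicit Arguments. Unset Strict Implicit. Unset Printing Implicit Defensive.
Import GRing.Theory Num.Theory.
Local Open Scope ring_scope.

Notation Rl := Rdefinitions.R.
Notation Cx := (Rl[i]).

Definition normsq (z : Cx) : Rl := (complex.Re z) ^+ 2 + (complex.Im z) ^+ 2.

Definition adjmx (m n : nat) (A : 'M[Cx]_(m, n)) : 'M[Cx]_(n, m) :=
  (map_mx (fun z : Cx => z^*) A)^T.

Definition unitarymx (n : nat) (A : 'M[Cx]_n) : Prop :=
  A *m adjmx A = 1%:M /\ adjmx A *m A = 1%:M.

(* An MM-QFA over the alphabet Sigma.  The state set is Q = 'I_n (any finite set
   can be indexed this way); input letters are [Some s], the end-marker $ is [None].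
   States are column vectors in C^Q. *)
Record mmqfa (Sigma : finType) := MMQFA {
  qn   : nat;
  qU   : option Sigma -> 'M[Cx]_qn;
  qq0  : 'I_qn;
  qacc : {set 'I_qn};
  qrej : {set 'I_qn}
}.

Section MMQFA.
Variable Sigma : finType.
Variable M : mmqfa Sigma.

Definition qnon : {set 'I_(qn M)} := ~: (qacc M :|: qrej M).

Definition mmqfa_wf : Prop :=
  (forall s : option Sigma, unitarymx (qU M s)) /\ [disjoint qacc M & qrej M].

Definition ket (q : 'I_(qn M)) : 'cV[Cx]_(qn M) :=
  \col_i (if i == q then 1 else 0).

Definition proj (A : {set 'I_(qn M)}) (v : 'cV[Cx]_(qn M)) : 'cV[Cx]_(qn M) :=
  \col_i (if i \in A then v i 0 else 0).

Definition sqnorm (v : 'cV[Cx]_(qn M)) : Rl := \sum_i normsq (v i 0).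

Definition config := ('cV[Cx]_(qn M) * Rl * Rl)%type.

Definition step (c : config) (s : option Sigma) : config :=
  let: (psi, pa, pr) := c in
  let psi' := qU M s *m psi in
  (proj qnon psi', pa + sqnorm (proj (qacc M) psi'), pr + sqnorm (proj (qrej M) psi')).

Definition init_config : config := (ket (qq0 M), 0, 0).

Definition run (x : seq Sigma) : config :=
  foldl step init_config (rcons (map Some x) None).

Definition accprob (x : seq Sigma) : Rl := (run x).1.2.

Definition state_after (w : seq Sigma) : 'cV[Cx]_(qn M) :=
  (foldl step init_config (map Some w)).1.1.

Definition end_decisive : Prop :=
  forall (w : seq Sigma) (s : Sigma),
    proj (qacc M) (qU M (Some s) *m state_after w) = 0.

Definition accepts_bpose (L : seq Sigma -> Prop) : Prop :=
  exists c : Rl, 0 < c /\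
    forall x : seq Sigma, (L x -> c < accprob x) /\ (~ L x -> accprob x = 0).

End MMQFA.

From Pilot Require Import Defs.
From mathcomp Require Import all_boot all_order all_algebra.
From mathcomp Require Import complex.
From mathcomp Require Import Rstruct.
From mathcomp Require Import mxtens ring.
From Stdlib Require Import Classical.
Import Order.TTheory GRing.Theory Num.Theory.
Local Open Scope ring_scope.

(* Run M and M' in parallel on C^Q (x) C^Q', accepting when both accept and
   rejecting when either rejects.  Before the end-marker neither factor has
   amplitude on accepting states (end-decisiveness), so projecting the product
   state onto the non-halting pairs is the tensor of the two projections: the
   product run stays the tensor of the two runs and accepts nothing early.  At
   the end-marker the accepting amplitude is again a tensor, so
   p_N(x) = p_M(x) p_M'(x), which is 0 outside L /\ L' and exceeds c c' on it. *)

Section Tensor.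
Variable R : pzRingType.

Lemma mxtens_index_eq m n (i i' : 'I_m) (j j' : 'I_n) :
  (mxtens_index (i, j) == mxtens_index (i', j')) = (i == i') && (j == j').
Proof. by rewrite (can_eq (@mxtens_indexK _ _)) xpair_eqE. Qed.

(* [u *t v] has [1 * 1] columns while ['cV_(m * n)] has [1]; [rewrite] does not
   identify the two, hence the casts here and in [tensmx_mul_col]. *)
Lemma tensmx_colE m n (u : 'cV[R]_m) (v : 'cV[R]_n) i j k :
  (u *t v : 'cV_(m * n)) (mxtens_index (i, j)) k = u i 0 * v j 0.
Proof.
by rewrite mxE mxtens_indexK (ord1 k) /=; congr (u i _ * v j _); apply: val_inj.
Qed.

Lemma tensmx11 m n : (1%:M : 'M[R]_m) *t (1%:M : 'M[R]_n) = 1%:M.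
Proof.
apply/matrixP => k l.
case: (mxtens_indexP k) => i j; case: (mxtens_indexP l) => i' j'.
rewrite tensmxE !mxE mxtens_index_eq.
by case: (i == i'); case: (j == j'); rewrite ?mulr1 ?mul0r ?mulr0.
Qed.

End Tensor.

Lemma tensmx_mul_col (R : comPzRingType) m n p q
    (A : 'M[R]_(m, n)) (B : 'M[R]_(p, q)) (u : 'cV_n) (v : 'cV_q) :
  (A *t B) *m (u *t v : 'cV_(n * q)) = ((A *m u) *t (B *m v) : 'cV_(m * p)).
Proof. exact: (tensmx_mul A B u v). Qed.

Lemma adjmx_tens m n p q (A : 'M[Cx]_(m, n)) (B : 'M[Cx]_(p, q)) :
  adjmx (A *t B) = adjmx A *t adjmx B.
Proof. by apply/matrixP => i j; rewrite !mxE rmorphM. Qed.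

Lemma unitarymx_tens m n (A : 'M[Cx]_m) (B : 'M[Cx]_n) :
  Defs.unitarymx A -> Defs.unitarymx B -> Defs.unitarymx (A *t B).
Proof.
move=> [AAh AhA] [BBh BhB].
by rewrite /Defs.unitarymx adjmx_tens !tensmx_mul AAh AhA BBh BhB tensmx11.
Qed.

Lemma normsqM (x y : Cx) : normsq (x * y) = normsq x * normsq y.
Proof. by case: x => a b; case: y => c d; rewrite /normsq /=; ring. Qed.

Section EndDecisive.
Context {Sigma : finType} (M : mmqfa Sigma).

Lemma sqnorm0 : sqnorm (M:=M) 0 = 0.
Proof. by rewrite /sqnorm big1 // => i _; rewrite mxE /normsq /= expr0n addr0. Qed.

Lemma step_state (c : config M) s :
  (step c s).1.1 = proj (qnon M) (qU M s *m c.1.1).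
Proof. by case: c => [[? ?] ?]. Qed.

Lemma step_acc (c : config M) s :
  (step c s).1.2 = c.1.2 + sqnorm (proj (qacc M) (qU M s *m c.1.1)).
Proof. by case: c => [[? ?] ?]. Qed.

Hypothesis edM : end_decisive M.

Lemma end_decisive_acc_before_end w :
  (foldl (@step _ M) (init_config M) (map Some w)).1.2 = 0.
Proof.
elim/last_ind: w => [|w s IHw] //.
by rewrite map_rcons foldl_rcons step_acc IHw add0r [proj _ _]edM sqnorm0.
Qed.

Lemma accprob_end_decisive x :
  accprob M x = sqnorm (proj (qacc M) (qU M None *m state_after M x)).
Proof.
by rewrite /accprob /run foldl_rcons step_acc end_decisive_acc_before_end add0r.
Qed.

End EndDecisive.

Section Product.
Context {Sigma : finType} (M M' : mmqfa Sigma).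

Definition prod_acc : {set 'I_(qn M * qn M')} :=
  [set k | ((mxtens_unindex k).1 \in qacc M) && ((mxtens_unindex k).2 \in qacc M')].

Definition prod_rej : {set 'I_(qn M * qn M')} :=
  [set k | ((mxtens_unindex k).1 \in qrej M) || ((mxtens_unindex k).2 \in qrej M')].

Definition mmqfa_prod : mmqfa Sigma :=
  @MMQFA Sigma (qn M * qn M') (fun s => qU M s *t qU M' s)
    (mxtens_index (qq0 M, qq0 M')) prod_acc prod_rej.

Local Notation N := mmqfa_prod.

Lemma mmqfa_wf_prod : mmqfa_wf M -> mmqfa_wf M' -> mmqfa_wf N.
Proof.
move=> [uM disjM] [uM' disjM']; split=> [s|]; first exact: unitarymx_tens.
apply/pred0P => k; case: (mxtens_indexP k) => i j /=.
rewrite !inE mxtens_indexK /=.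
by case: (boolP (i \in qacc M)) => [/(disjointFr disjM)->|];
   case: (boolP (j \in qacc M')) => [/(disjointFr disjM')->|].
Qed.

Lemma ket_prod : ket (qq0 N) = ket (qq0 M) *t ket (qq0 M').
Proof.
apply/matrixP => k l; case: (mxtens_indexP k) => i j.
by rewrite tensmx_colE !mxE mxtens_index_eq; case: eqP; case: eqP;
   rewrite ?mulr1 ?mul0r ?mulr0.
Qed.

Lemma proj_acc_prod (u : 'cV[Cx]_(qn M)) (v : 'cV[Cx]_(qn M')) :
  proj (qacc N) (u *t v) = proj (qacc M) u *t proj (qacc M') v.
Proof.
apply/matrixP => k l; case: (mxtens_indexP k) => i j.
rewrite !(tensmx_colE, mxE) inE mxtens_indexK /=.
by case: (i \in qacc M); case: (j \in qacc M'); rewrite ?mul0r ?mulr0.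
Qed.

(* The hypotheses are needed: a pair (acc, non) lies in neither prod_acc nor
   prod_rej, so it is non-halting in N. *)
Lemma proj_non_prod (u : 'cV[Cx]_(qn M)) (v : 'cV[Cx]_(qn M')) :
  proj (qacc M) u = 0 -> proj (qacc M') v = 0 ->
  proj (qnon N) (u *t v) = proj (qnon M) u *t proj (qnon M') v.
Proof.
move=> /matrixP u_acc /matrixP v_acc.
apply/matrixP => k l; case: (mxtens_indexP k) => i j.
rewrite !(tensmx_colE, mxE) !inE mxtens_indexK /=.
case: (boolP (i \in qacc M)) => [iA|_].
  by move: (u_acc i 0); rewrite !mxE iA => ->; rewrite !mul0r; case: ifP.
case: (boolP (j \in qacc M')) => [jA|_].
  by move: (v_acc j 0); rewrite !mxE jA => ->; rewrite !mulr0; case: ifP.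
by case: (i \in qrej M); case: (j \in qrej M'); rewrite ?mul0r ?mulr0.
Qed.

Lemma sqnorm_prod (u : 'cV[Cx]_(qn M)) (v : 'cV[Cx]_(qn M')) :
  sqnorm (M:=N) (u *t v) = sqnorm u * sqnorm v.
Proof.
rewrite /sqnorm (reindex (@mxtens_index _ _)) /=; last first.
  by exists (@mxtens_unindex _ _) => k _; rewrite ?mxtens_indexK ?mxtens_unindexK.
rewrite mulr_suml; under [RHS]eq_bigr do rewrite mulr_sumr.
rewrite pair_big /=; apply: eq_bigr => -[i j] _.
by rewrite tensmx_colE normsqM.
Qed.

Hypotheses (edM : end_decisive M) (edM' : end_decisive M').

Lemma state_after_prod w :
  state_after N w = state_after M w *t state_after M' w.
Proof.
elim/last_ind: w => [|w s IHw]; first exact: ket_prod.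
have accM := edM w s; have accM' := edM' w s.
rewrite /state_after in IHw accM accM' *.
rewrite !map_rcons !foldl_rcons !step_state IHw /= tensmx_mul_col.
exact: proj_non_prod.
Qed.

Lemma end_decisive_prod : end_decisive N.
Proof.
move=> w s; rewrite state_after_prod /= tensmx_mul_col proj_acc_prod.
by rewrite [proj _ (_ *m state_after M w)]edM tens0mx.
Qed.

Lemma accprob_prod x : accprob N x = accprob M x * accprob M' x.
Proof.
rewrite !accprob_end_decisive //; last exact: end_decisive_prod.
by rewrite state_after_prod /= tensmx_mul_col proj_acc_prod sqnorm_prod.
Qed.

End Product.

Theorem corollary4p9 (Sigma : finType) (L L' : seq Sigma -> Prop)
    (M M' : mmqfa Sigma) :
  mmqfa_wf M -> end_decisive M -> accepts_bpose M L ->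
  mmqfa_wf M' -> end_decisive M' -> accepts_bpose M' L' ->
  exists N : mmqfa Sigma,
    mmqfa_wf N /\ end_decisive N /\ accepts_bpose N (fun x => L x /\ L' x).
Proof.
move=> wfM edM [c [c_gt0 accM]] wfM' edM' [c' [c'_gt0 accM']].
exists (mmqfa_prod M M'); split; first exact: mmqfa_wf_prod.
split; first exact: end_decisive_prod.
exists (c * c'); split=> [|x]; first exact: mulr_gt0.
rewrite accprob_prod //; split=> [[Lx L'x]|notLL'x].
  apply: ltr_pM; [exact: ltW c_gt0 | exact: ltW c'_gt0 |
                  exact: (accM x).1 | exact: (accM' x).1].
have [Lx|notLx] := classic (L x); last by rewrite (accM x).2 // mul0r.
by rewrite (accM' x).2 ?mulr0 // => L'x; apply: notLL'x.
Qed.
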